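(* Let $\alpha=(x,u')$ and $\beta=(y,v')$ be points of $\mathcal{S}$ with $x\neq y$, $u'\neq v'$, $u'\notin y'^{\perp}$ and $v'\notin x'^{\perp}$ (perps taken in $S'$). Then $|\{\alpha,\beta\}^{\perp}|\geq 3$ in $\mathcal{S}$.
   Context: Let $S=(P,L)$ and $S'=(P',L')$ be generalized quadrangles of order $(2,2)$ (every line has 3 points, every point lies on 3 lines, and for each point $x$ and line $l\not\ni x$ exactly one point of $l$ is collinear with $x$), with an isomorphism $x\mapsto x'$ from $S$ to $S'$. In a point-line geometry, $x^{\perp}$ is $x$ together with all points collinear with $x$, and $A^{\perp}=\bigcap_{a\in A}a^{\perp}$. A triad is a set of three pairwise non-collinear points, complete if $|T^{\perp}|=3$. The geometry $\mathcal{S}=(\mathcal{P},\mathcal{L})$ has point set $\mathcal{P}=\{(x,y')\in P\times P':y'\in x'^{\perp}\}$ and lines all $3$-subsets $\{(x,u'),(y,v'),(z,w')\}$ of $\mathcal{P}$ where $T=\{x,y,z\}$ (three distinct points) is a line or a complete triad of $S$ and $\{u',v',w'\}=T'^{\perp}$ in $S'$ with $u',v',w'$ distinct. *)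

From mathcomp Require Import all_boot.
Set Implicit Arguments. Unset Strict Implicit. Unset Printing Implicit Defensive.

Section Geom.
Variable P : finType.
Implicit Types (L : {set {set P}}) (x y : P) (A : {set P}).

Definition collinear L x y : bool := [exists l in L, (x \in l) && (y \in l)].

Definition perp L x : {set P} := [set y | (y == x) || collinear L x y].

Definition perpS L A : {set P} := \bigcap_(a in A) perp L a.

Definition GQ22 L : Prop :=
  [/\ (forall l, l \in L -> #|l| = 3),
      (forall x, #|[set l in L | x \in l]| = 3),
      (forall x y, x != y -> #|[set l in L | (x \in l) && (y \in l)]| <= 1)
    & (forall x l, l \in L -> x \notin l ->
         #|[set y in l | collinear L x y]| = 1)].

Definition triad L A : bool :=
  (#|A| == 3) && [forall a in A, forall b in A, (a != b) ==> ~~ collinear L a b].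

Definition complete_triad L A : bool := triad L A && (#|perpS L A| == 3).

End Geom.

Definition is_iso (P P' : finType) (L : {set {set P}}) (L' : {set {set P'}})
  (f : P -> P') : Prop :=
  bijective f /\ forall l : {set P}, (l \in L) = (f @: l \in L').

Section Construction.
Variables (P P' : finType) (L : {set {set P}}) (L' : {set {set P'}}) (f : P -> P').

Definition calP : {set (P * P')} := [set p | p.2 \in perp L' (f p.1)].

Definition calL : {set {set (P * P')}} :=
  [set X : {set (P * P')} | (X \subset calP) &&
    [exists x : P, exists y : P, exists z : P,
     exists u : P', exists v : P', exists w : P',
       [&& (x != y), (x != z), (y != z), (u != v), (u != w), (v != w),
           X == [set (x, u); (y, v); (z, w)],
           ([set x; y; z] \in L) || complete_triad L [set x; y; z] &
           perpS L' [set f x; f y; f z] == [set u; v; w]]]].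
End Construction.

From mathcomp Require Import all_boot.
Set Implicit Arguments. Unset Strict Implicit. Unset Printing Implicit Defensive.

(* For each of the three points w' of {x', y'}^perp, choose z' in {u', v'}^perp
   collinear with w'; it exists because in GQ(2,2) every point is collinear with
   a point of {u', v'}^perp. Then (z, w') is collinear in calS with alpha and with
   beta: the hypotheses give x <> z, u' <> w' and u', w' in {x', z'}^perp, and for
   any such pair, x and z lie in a line or complete triad T of S with
   T^perp = {x, z}^perp (for non-collinear x, z this is the regularity of the
   points of GQ(2,2)), so T and the three points of {x', z'}^perp form a line of
   calS through (x, u') and (z, w'). These points (z, w') have distinct second
   coordinates. *)

Lemma card3_third (T : finType) (S : {set T}) a b :
  #|S| = 3 -> a \in S -> b \in S -> a != b ->
  exists t, [/\ t != a, t != b & S = [set a; b; t]].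
Proof.
move=> S3 aS bS ab.
have bSa : b \in S :\ a by rewrite !inE eq_sym ab.
have /eqP/cards1P [t St] : #|S :\ a :\ b| = 1.
  by move: S3; rewrite (cardsD1 a) aS (cardsD1 b (S :\ a)) bSa; case.
have : t \in S :\ a :\ b by rewrite St set11.
rewrite !inE => /and3P [tb ta _]; exists t; split => //.
apply/setP => z; rewrite !inE; have /setP/(_ z) := St.
by rewrite !inE; case: eqP => [-> _|_]; case: eqP => [->|_] //= ->.
Qed.

Lemma card3_set3 (T : finType) (S : {set T}) :
  #|S| = 3 -> exists a b c, [/\ a != b, a != c, b != c & S = [set a; b; c]].
Proof.
move=> S3; have /card_gt0P [a aS] : 0 < #|S| by rewrite S3.
have /card_gt0P [b] : 0 < #|S :\ a| by move: S3; rewrite (cardsD1 a) aS add1n; case=> ->.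
rewrite !inE => /andP [ba bS].
have [c [cb ca ->]] := card3_third S3 bS aS ba.
by exists b, a, c; split; rewrite // eq_sym.
Qed.

Lemma cards3 (T : finType) (a b c : T) :
  a != b -> a != c -> b != c -> #|[set a; b; c]| = 3.
Proof.
move=> ab ac bc; rewrite -setUA cardsU1 cards2 bc.
by rewrite !inE negb_or ab ac.
Qed.

Lemma card_le3_eq (T : finType) (S : {set T}) x1 x2 y1 y2 :
  #|S| <= 3 -> {subset [:: x1; x2; y1; y2] <= S} -> x1 != x2 ->
  y1 \notin [:: x1; x2] -> y2 \notin [:: x1; x2] -> y1 = y2.
Proof.
move=> S3 sub x12 y1x y2x; apply/eqP; apply: contraTT S3 => y12.
have /card_uniqP s4 : uniq [:: x1; x2; y1; y2].
  move: y1x y2x; rewrite /= !inE !negb_or => /andP [y1x1 y1x2] /andP [y2x1 y2x2].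
  by rewrite x12 y12 !(eq_sym x1) !(eq_sym x2) y1x1 y1x2 y2x1 y2x2.
by rewrite -ltnNge -[4]s4; apply/subset_leq_card/subsetP.
Qed.

Section PointLineGeometry.
Variables (T : finType) (L : {set {set T}}).

Lemma perpS2 a b : perpS L [set a; b] = perp L a :&: perp L b.
Proof.
apply/setP => y; rewrite in_setI; apply/bigcapP/andP => [H|[ha hb] z].
  by split; apply: H; rewrite !inE eqxx ?orbT.
by case/set2P => ->.
Qed.

Lemma perpS3 a b c :
  perpS L [set a; b; c] = perp L a :&: perp L b :&: perp L c.
Proof.
apply/setP => y; rewrite !in_setI -andbA; apply/bigcapP/and3P => [H|[ha hb hc] z].
  by split; apply: H; rewrite !inE eqxx ?orbT.
by case/setUP => [/set2P [] ->| /set1P ->].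
Qed.

Lemma collinearP a b :
  reflect (exists2 l, l \in L & (a \in l) && (b \in l)) (collinear L a b).
Proof. exact: (iffP exists_inP). Qed.

Lemma collinear_line l a b : l \in L -> a \in l -> b \in l -> collinear L a b.
Proof. by move=> lL al bl; apply/collinearP; exists l; rewrite ?al. Qed.

Lemma collinear_sym a b : collinear L a b = collinear L b a.
Proof.
by apply/collinearP/collinearP => -[l lL /andP [? ?]]; exists l => //; apply/andP.
Qed.

End PointLineGeometry.

Section GQ22Theory.
Variables (T : finType) (L : {set {set T}}).
Hypothesis HL : GQ22 L.

Lemma card_line l : l \in L -> #|l| = 3.
Proof. by case: HL => H _ _ _; apply: H. Qed.

Lemma card_lines_through a : #|[set l in L | a \in l]| = 3.
Proof. by case: HL => _ H _ _; apply: H. Qed.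

Lemma line_uniq a b l m : a != b -> l \in L -> m \in L ->
  a \in l -> b \in l -> a \in m -> b \in m -> l = m.
Proof.
move=> ab lL mL al bl am bm; case: HL => _ _ /(_ a b ab) /card_le1_eqP H _.
by apply: H; rewrite inE ?lL ?mL ?al ?bl ?am ?bm.
Qed.

Lemma exists_line a : exists2 l, l \in L & a \in l.
Proof.
have /card_gt0P [l] : 0 < #|[set l in L | a \in l]| by rewrite card_lines_through.
by rewrite inE => /andP [lL al]; exists l.
Qed.

Lemma collinear_refl a : collinear L a a.
Proof. by have [l lL al] := exists_line a; apply: (collinear_line lL). Qed.

Lemma mem_perp a b : (b \in perp L a) = collinear L a b.
Proof. by rewrite inE; case: eqP => [->|]; rewrite ?collinear_refl. Qed.

Lemma perp_sym a b : (b \in perp L a) = (a \in perp L b).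
Proof. by rewrite !mem_perp collinear_sym. Qed.

Lemma mem_perp2 a b c :
  (c \in perp L a :&: perp L b) = (a \in perp L c) && (b \in perp L c).
Proof. by rewrite in_setI !(perp_sym _ c). Qed.

Lemma card_line_perp l a : l \in L -> a \notin l -> #|l :&: perp L a| = 1.
Proof.
case: HL => _ _ _ H lL al; rewrite -(H a l lL al).
by apply: eq_card => y; rewrite in_setI mem_perp inE.
Qed.

Lemma exists_proj l a : l \in L -> a \notin l -> exists2 p, p \in l & collinear L a p.
Proof.
move=> lL al; have /card_gt0P [p] : 0 < #|l :&: perp L a| by rewrite card_line_perp.
by rewrite in_setI mem_perp => /andP [pl ap]; exists p.
Qed.

Lemma proj_uniq l a p q : l \in L -> a \notin l -> p \in l -> q \in l ->
  collinear L a p -> collinear L a q -> p = q.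
Proof.
move=> lL al pl ql ap aq; have /eqP/cards1P [z Ez] := card_line_perp lL al.
have : p \in l :&: perp L a by rewrite in_setI pl mem_perp.
have : q \in l :&: perp L a by rewrite in_setI ql mem_perp.
by rewrite Ez !inE => /eqP -> /eqP ->.
Qed.

Lemma mem_line_collinear2 l p q c : l \in L -> p \in l -> q \in l -> p != q ->
  collinear L c p -> collinear L c q -> c \in l.
Proof.
move=> lL pl ql pq cp cq; apply: contraNT pq => cl.
by rewrite (proj_uniq lL cl pl ql cp cq).
Qed.

Lemma perp2_line l a b : a != b -> l \in L -> a \in l -> b \in l ->
  perp L a :&: perp L b = l.
Proof.
move=> ab lL al bl; apply/setP => c; rewrite in_setI !mem_perp.
apply/andP/idP => [[ac bc]|cl]; last by split; apply: (collinear_line lL).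
by apply: (mem_line_collinear2 lL al bl ab); rewrite collinear_sym.
Qed.

Lemma perp2_card a b : a != b -> #|perp L a :&: perp L b| = 3.
Proof.
move=> ab; case: (boolP (collinear L a b)) => [/collinearP [l lL /andP [al bl]]|nab].
  by rewrite (perp2_line ab lL al bl) card_line.
(* Projecting b onto the lines through a is a bijection onto {a, b}^perp. *)
have b_off l : l \in L -> a \in l -> b \notin l.
  by move=> lL al; apply: contra nab => /(collinear_line lL al).
pose proj (l : {set T}) := odflt a [pick c in l | collinear L b c].
have projP l : l \in L -> a \in l -> (proj l \in l) && collinear L b (proj l).
  move=> lL al; have [p pl bp] := exists_proj lL (b_off l lL al).
  rewrite /proj; case: pickP => [c /andP [-> ->] //|/(_ p)].
  by rewrite pl bp.
have -> : perp L a :&: perp L b = proj @: [set l in L | a \in l].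
  apply/setP => c; rewrite in_setI !mem_perp; apply/andP/imsetP => [[ac bc]|].
    have /collinearP [l lL /andP [al cl]] := ac.
    exists l; first by rewrite inE lL al.
    have /andP [pl bp] := projP l lL al.
    exact: proj_uniq lL (b_off l lL al) cl pl bc bp.
  case=> l; rewrite inE => /andP [lL al] ->.
  by have /andP [pl ->] := projP l lL al; rewrite (collinear_line lL al pl).
rewrite card_in_imset ?card_lines_through // => l m.
rewrite !inE => /andP [lL al] /andP [mL am] lm.
have /andP [pl bp] := projP l lL al; have /andP [pm _] := projP m mL am.
have ap : a != proj l by apply: contraNneq nab => ->; rewrite collinear_sym.
by apply: (line_uniq ap lL mL al pl am); rewrite lm.
Qed.

Lemma perp2_noncollinear a b c d : ~~ collinear L a b ->
  c \in perp L a :&: perp L b -> d \in perp L a :&: perp L b -> c != d ->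
  ~~ collinear L c d.
Proof.
rewrite !in_setI !mem_perp => nab /andP [ac bc] /andP [ad bd] cd.
apply: contra nab => /collinearP [l lL /andP [cl dl]].
by apply: (collinear_line lL); apply: (mem_line_collinear2 lL cl dl cd).
Qed.

Lemma noncollinear_line_other l e r c d : l \in L -> e \in l -> r \in l -> d \in l ->
  r != e -> collinear L c e -> ~~ collinear L c d -> ~~ collinear L c r.
Proof.
move=> lL el rl dl re ce; apply: contra => cr; have cl : c \in l.
  apply: contraNT re => cl; apply/eqP; exact: proj_uniq lL cl rl el cr ce.
exact: collinear_line lL cl dl.
Qed.

Lemma collinear_third_line t c1 c2 p q : ~~ collinear L c1 c2 ->
  collinear L c1 t -> collinear L c2 t -> collinear L t p -> collinear L t q ->
  ~~ collinear L c1 p -> ~~ collinear L c2 p ->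
  ~~ collinear L c1 q -> ~~ collinear L c2 q -> collinear L p q.
Proof.
move=> n12 /collinearP [l1 l1L /andP [c1l1 tl1]] /collinearP [l2 l2L /andP [c2l2 tl2]].
move=> /collinearP [m m_L /andP [tm pm]] /collinearP [m' m'L /andP [tm' qm']].
move=> n1p n2p n1q n2q.
have l12 : l1 != l2.
  by apply: contraNneq n12 => e; apply: (collinear_line l1L c1l1); rewrite e.
have other (k : {set T}) r : r \in k -> ~~ collinear L c1 r -> ~~ collinear L c2 r ->
    k \notin [:: l1; l2].
  move=> rk n1 n2; rewrite !inE negb_or; apply/andP; split.
    by apply: contraNneq n1 => e; rewrite e in rk; apply: collinear_line l1L c1l1 rk.
  by apply: contraNneq n2 => e; rewrite e in rk; apply: collinear_line l2L c2l2 rk.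
have em : m = m'.
  apply: (card_le3_eq (S := [set k in L | t \in k]) _ _ l12).
  - by rewrite card_lines_through.
  - by move=> k; rewrite !inE => /or4P [] /eqP ->; apply/andP.
  - exact: other pm n1p n2p.
  - exact: other qm' n1q n2q.
by apply: (collinear_line m_L pm); rewrite em.
Qed.

Lemma perp2_third_collinear a b c1 c2 c3 t : ~~ collinear L a b ->
  c1 != c2 -> c1 != c3 -> c2 != c3 ->
  perp L a :&: perp L b = [set c1; c2; c3] ->
  t \in perp L c1 :&: perp L c2 -> ~~ collinear L a t -> ~~ collinear L b t ->
  collinear L c3 t.
Proof.
(* Otherwise the points p on a c3 and q on b c3 collinear with t both lie on the
   third line through t, and p, q, c3 would form a triangle. *)
move=> nab c12 c13 c23 Eab tc nat nbt.
have c1ab : c1 \in perp L a :&: perp L b by rewrite Eab !inE eqxx.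
have c2ab : c2 \in perp L a :&: perp L b by rewrite Eab !inE eqxx ?orbT.
have c3ab : c3 \in perp L a :&: perp L b by rewrite Eab !inE eqxx ?orbT.
have n12 := perp2_noncollinear nab c1ab c2ab c12.
have n13 := perp2_noncollinear nab c1ab c3ab c13.
have n23 := perp2_noncollinear nab c2ab c3ab c23.
apply: contraT => n3t.
move: c1ab c2ab c3ab tc; rewrite !in_setI !mem_perp.
move=> /andP [ac1 bc1] /andP [ac2 bc2] /andP [ac3 bc3] /andP [c1t c2t].
case/collinearP: ac3 => la laL /andP [ala c3la].
case/collinearP: bc3 => lb lbL /andP [blb c3lb].
have tla : t \notin la by apply: contra n3t => /(collinear_line laL c3la).
have tlb : t \notin lb by apply: contra n3t => /(collinear_line lbL c3lb).
have [p pla tp] := exists_proj laL tla.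
have [q qlb tq] := exists_proj lbL tlb.
have pa : p != a by apply: contraNneq nat => <-; rewrite collinear_sym.
have qb : q != b by apply: contraNneq nbt => <-; rewrite collinear_sym.
have offa c : collinear L a c -> ~~ collinear L c c3 -> ~~ collinear L c p.
  by rewrite collinear_sym; apply: noncollinear_line_other laL ala pla c3la pa.
have offb c : collinear L b c -> ~~ collinear L c c3 -> ~~ collinear L c q.
  by rewrite collinear_sym; apply: noncollinear_line_other lbL blb qlb c3lb qb.
have pq : collinear L p q.
  apply: (collinear_third_line n12 c1t c2t tp tq).
  - exact: offa ac1 n13.
  - exact: offa ac2 n23.
  - exact: offb bc1 n13.
  - exact: offb bc2 n23.
have pc3 : p != c3 by apply: contraNneq n3t => <-; rewrite collinear_sym.
have qc3 : q != c3 by apply: contraNneq n3t => <-; rewrite collinear_sym.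
have qla : q \in la.
  apply: (mem_line_collinear2 laL pla c3la pc3); first by rewrite collinear_sym.
  exact: collinear_line qlb c3lb.
have elab := line_uniq qc3 laL lbL qla c3la qlb c3lb.
by case/negP: nab; apply: (collinear_line laL ala); rewrite elab.
Qed.

Lemma perp2_regular a b : ~~ collinear L a b -> exists t,
  [/\ ~~ collinear L a t, ~~ collinear L b t & perp L a :&: perp L b \subset perp L t].
Proof.
move=> nab; have ab : a != b by apply: contraNneq nab => ->; apply: collinear_refl.
have [c1 [c2 [c3 [c12 c13 c23 Eab]]]] := card3_set3 (perp2_card ab).
have c1ab : c1 \in perp L a :&: perp L b by rewrite Eab !inE eqxx.
have c2ab : c2 \in perp L a :&: perp L b by rewrite Eab !inE eqxx ?orbT.
have n12 := perp2_noncollinear nab c1ab c2ab c12.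
move: c1ab c2ab; rewrite !mem_perp2 => /andP [ac1 bc1] /andP [ac2 bc2].
have ac : a \in perp L c1 :&: perp L c2 by rewrite in_setI ac1 ac2.
have bc : b \in perp L c1 :&: perp L c2 by rewrite in_setI bc1 bc2.
have [t [ta tb Ec]] := card3_third (perp2_card c12) ac bc ab.
have tc : t \in perp L c1 :&: perp L c2 by rewrite Ec !inE eqxx ?orbT.
have nat : ~~ collinear L a t by apply: (perp2_noncollinear n12 ac tc); rewrite eq_sym.
have nbt : ~~ collinear L b t by apply: (perp2_noncollinear n12 bc tc); rewrite eq_sym.
exists t; split => //; rewrite Eab; apply/subsetP => c.
have c3t := perp2_third_collinear nab c12 c13 c23 Eab tc nat nbt.
move: tc; rewrite in_setI => /andP [c1t c2t].
by case/setUP => [/set2P [] | /set1P] ->; rewrite perp_sym // mem_perp.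
Qed.

Lemma line_or_complete_triad a b : a != b -> exists t,
  [/\ t != a, t != b, ([set a; b; t] \in L) || complete_triad L [set a; b; t]
    & perpS L [set a; b; t] = perp L a :&: perp L b].
Proof.
move=> ab; case: (boolP (collinear L a b)) => [/collinearP [l lL /andP [al bl]]|nab].
  have [t [ta tb El]] := card3_third (card_line lL) al bl ab.
  exists t; split => //; first by rewrite -El lL.
  rewrite perpS3 (perp2_line ab lL al bl); apply/setIidPl/subsetP => c cl.
  by rewrite mem_perp (collinear_line lL _ cl) // El !inE eqxx ?orbT.
have [t [nat nbt sub]] := perp2_regular nab.
have neq_at : a != t by apply: contraNneq nat => <-; apply: collinear_refl.
have neq_bt : b != t by apply: contraNneq nbt => <-; apply: collinear_refl.
have E : perpS L [set a; b; t] = perp L a :&: perp L b.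
  by rewrite perpS3; apply/setIidPl.
exists t; split; rewrite ?(eq_sym t) //; apply/orP; right.
rewrite /complete_triad /triad E perp2_card // cards3 //= andbT.
apply/forall_inP => c Hc; apply/forall_inP => d Hd; apply/implyP.
by move: Hc Hd; rewrite !inE => /orP [/orP []|] /eqP -> /orP [/orP []|] /eqP ->;
  rewrite ?eqxx // => _; rewrite // collinear_sym.
Qed.

Lemma card_perpD1 a : #|perp L a :\ a| <= 6.
Proof.
have [l1 [l2 [l3 [_ _ _ El]]]] := card3_set3 (card_lines_through a).
have card_lineD1 l : l \in [set l1; l2; l3] -> #|l :\ a| = 2.
  rewrite -El inE => /andP [lL al].
  by move: (card_line lL); rewrite (cardsD1 a) al add1n; case.
have sub : perp L a :\ a \subset l1 :\ a :|: l2 :\ a :|: l3 :\ a.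
  apply/subsetP => c; rewrite in_setD1 mem_perp.
  case/andP => ca /collinearP [l lL /andP [al cl]].
  have : l \in [set l1; l2; l3] by rewrite -El inE lL al.
  by rewrite !inE => /orP [/orP []|] /eqP <-; rewrite ca cl ?orbT.
apply: leq_trans (subset_leq_card sub) _.
apply: leq_trans (leq_card_setU _ _).1 _.
apply: leq_trans (leq_add (leq_card_setU _ _).1 (leqnn _)) _.
by rewrite !card_lineD1 // !inE eqxx ?orbT.
Qed.

Lemma perp2_meets_perp_near a u v : a \in perp L u ->
  exists2 b, b \in perp L u :&: perp L v & a \in perp L b.
Proof.
rewrite mem_perp => /collinearP [l lL /andP [ul al]].
case: (boolP (v \in l)) => vl.
  exists u; last by rewrite mem_perp (collinear_line lL ul al).
  by rewrite in_setI !mem_perp collinear_refl (collinear_line lL vl ul).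
have [p pl vp] := exists_proj lL vl.
exists p; first by rewrite in_setI !mem_perp (collinear_line lL ul pl) vp.
by rewrite mem_perp (collinear_line lL pl al).
Qed.

Lemma perp2_meets_perp_far a u v : ~~ collinear L u v ->
  a \notin perp L u -> a \notin perp L v ->
  exists2 b, b \in perp L u :&: perp L v & a \in perp L b.
Proof.
(* Otherwise {u, a}^perp and {v, a}^perp partition a^perp minus a, so for b in
   {u, v}^perp the three points of {a, b}^perp would lie on the lines ub and vb,
   which meet a^perp in one point each. *)
move=> nuv au av; apply/exists_inP; apply: contraT => /exists_inPn none.
have uv : u != v by apply: contraNneq nuv => ->; apply: collinear_refl.
have ua : u != a by apply: contraNneq au => ->; rewrite mem_perp collinear_refl.
have va : v != a by apply: contraNneq av => ->; rewrite mem_perp collinear_refl.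
set C := perp L u :&: perp L a; set D := perp L v :&: perp L a.
have CD : C :&: D = set0.
  apply/setP => e; rewrite !in_setI in_set0.
  apply/negbTE/negP => /andP [/andP [eu ea] /andP [ev _]].
  by move: (none e); rewrite in_setI eu ev (perp_sym e) ea => /(_ isT).
have sub : C :|: D \subset perp L a :\ a.
  apply/subsetP => e; rewrite in_setD1 in_setU !in_setI => /orP [] /andP [e_ ->];
    by rewrite andbT; apply: contraTneq e_ => ->.
have ECD : C :|: D = perp L a :\ a.
  apply/eqP; rewrite eqEcard sub (leq_trans (card_perpD1 a)) //.
  by rewrite cardsU CD cards0 subn0 !perp2_card.
have /card_gt0P [b buv] : 0 < #|perp L u :&: perp L v| by rewrite perp2_card.
have nab := none b buv.
have ba : b != a by apply: contraNneq nab => ->; rewrite mem_perp collinear_refl.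
move: (buv); rewrite in_setI !mem_perp => /andP [ub vb].
have ubn : u != b by apply: contraNneq nuv => ->; rewrite collinear_sym.
have vbn : v != b by apply: contraNneq nuv => ->.
case/collinearP: ub => lu luL /andP [ulu blu].
case/collinearP: vb => lv lvL /andP [vlv blv].
have alu : a \notin lu.
  by apply: contra au => alu; rewrite mem_perp (collinear_line luL ulu).
have alv : a \notin lv.
  by apply: contra av => alv; rewrite mem_perp (collinear_line lvL vlv).
have sub_ab : perp L b :&: perp L a \subset (lu :&: perp L a) :|: (lv :&: perp L a).
  apply/subsetP => e; rewrite in_setI => /andP [eb ea].
  have : e \in perp L a :\ a by rewrite in_setD1 ea andbT; apply: contraNneq nab => <-.
  rewrite -ECD in_setU !in_setI => /orP [] /andP [e_ _]; rewrite in_setU !in_setI ea.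
  - by rewrite -(perp2_line ubn luL ulu blu) in_setI e_ eb.
  - by rewrite -(perp2_line vbn lvL vlv blv) in_setI e_ eb orbT.
move: (subset_leq_card sub_ab); rewrite perp2_card //.
by move/leq_trans/(_ (leq_card_setU _ _).1); rewrite !card_line_perp.
Qed.

Lemma perp2_meets_perp a u v : u != v ->
  exists2 b, b \in perp L u :&: perp L v & a \in perp L b.
Proof.
move=> uv; case: (boolP (a \in perp L u)) => au; first exact: perp2_meets_perp_near.
case: (boolP (a \in perp L v)) => av.
  by have [b] := perp2_meets_perp_near u av; rewrite setIC; exists b.
case: (boolP (collinear L u v)) => [/collinearP [l lL /andP [ul vl]]|nuv];
  last exact: perp2_meets_perp_far.
have al : a \notin l by apply: contra au => al; rewrite mem_perp (collinear_line lL ul).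
have [p pl ap] := exists_proj lL al.
by exists p; rewrite ?(perp2_line uv lL ul vl) // mem_perp collinear_sym.
Qed.

End GQ22Theory.

Section Isomorphism.
Variables (P P' : finType) (L : {set {set P}}) (L' : {set {set P'}}).
Variables (f : P -> P') (g : P' -> P).
Hypotheses (fK : cancel f g) (gK : cancel g f).
Hypothesis f_lines : forall l : {set P}, (l \in L) = (f @: l \in L').

Lemma collinear_iso a b : collinear L' (f a) (f b) = collinear L a b.
Proof.
apply/collinearP/collinearP => [[l' l'L /andP [al bl]]|[l lL /andP [al bl]]].
  exists (f @^-1: l'); last by rewrite !inE al bl.
  rewrite f_lines (can2_imset_pre _ fK gK).
  by have -> : g @^-1: (f @^-1: l') = l' by apply/setP => y; rewrite !inE gK.
by exists (f @: l); rewrite -?f_lines // !imset_f.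
Qed.

Lemma perp_iso a b : (f b \in perp L' (f a)) = (b \in perp L a).
Proof. by rewrite !inE (can_eq fK) collinear_iso. Qed.

Lemma perpS_iso (A : {set P}) : perpS L' (f @: A) = f @: perpS L A.
Proof.
apply/setP => y; rewrite -[y]gK mem_imset; last exact: can_inj fK.
apply/bigcapP/bigcapP => [H a aA|H _ /imsetP [a aA ->]].
  by rewrite -perp_iso; apply: H; apply: imset_f.
by rewrite perp_iso; apply: H.
Qed.

Lemma collinear_calL x z u w : GQ22 L -> x != z -> u != w ->
  u \in perp L' (f x) :&: perp L' (f z) -> w \in perp L' (f x) :&: perp L' (f z) ->
  collinear (calL L L' f) (x, u) (z, w).
Proof.
move=> HL xz uw hu hw.
have [t [tx tz Hxzt Ext]] := line_or_complete_triad HL xz.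
have Exz : perp L' (f x) :&: perp L' (f z) = f @: (perp L x :&: perp L z).
  by rewrite -!perpS2 -perpS_iso imsetU1 imset_set1.
have E : perpS L' [set f x; f z; f t] = perp L' (f x) :&: perp L' (f z).
  by rewrite Exz -Ext -perpS_iso imsetU imsetU1 !imset_set1.
have card_xz : #|perp L' (f x) :&: perp L' (f z)| = 3.
  by rewrite Exz card_imset ?perp2_card //; apply: can_inj fK.
have [r [ru rw Er]] := card3_third card_xz hu hw uw.
have : r \in perpS L' [set f x; f z; f t] by rewrite E Er !inE eqxx ?orbT.
rewrite perpS3 !in_setI => /andP [_ rt].
apply/exists_inP; exists [set (x, u); (z, w); (t, r)]; last by rewrite !inE !eqxx ?orbT.
rewrite inE; apply/andP; split.
  move: hu hw; rewrite !in_setI => /andP [ux _] /andP [_ wz].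
  by apply/subsetP => p /setUP [/set2P [] | /set1P] ->; rewrite inE.
apply/existsP; exists x; apply/existsP; exists z; apply/existsP; exists t.
apply/existsP; exists u; apply/existsP; exists w; apply/existsP; exists r.
rewrite xz uw (eq_sym x) tx (eq_sym z) tz (eq_sym u) ru (eq_sym w) rw.
by rewrite eqxx Hxzt E Er eqxx.
Qed.
End Isomorphism.

Theorem lemma3p2 (P P' : finType) (L : {set {set P}}) (L' : {set {set P'}})
  (f : P -> P') :
  GQ22 L -> GQ22 L' -> is_iso L L' f ->
  forall (x y : P) (u v : P'),
    (x, u) \in calP L' f -> (y, v) \in calP L' f ->
    x != y -> u != v ->
    u \notin perp L' (f y) -> v \notin perp L' (f x) ->
    3 <= #|perpS (calL L L' f) [set (x, u); (y, v)]|.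
Proof.
move=> HL HL' [[g fK gK] f_lines] x y u v xu yv xy uv uy vx.
rewrite /calP in_set /= in xu; rewrite /calP in_set /= in yv.
have sub : perp L' (f x) :&: perp L' (f y) \subset
           snd @: perpS (calL L L' f) [set (x, u); (y, v)].
  apply/subsetP => w; rewrite in_setI => /andP [wx wy].
  have [Z] := perp2_meets_perp HL' w uv; rewrite in_setI => /andP [Zu Zv] wZ.
  have uZ : u \in perp L' Z by rewrite (perp_sym HL').
  have vZ : v \in perp L' Z by rewrite (perp_sym HL').
  apply/imsetP; exists (g Z, w) => //; rewrite perpS2 in_setI /perp !in_set.
  apply/andP; split; apply/orP; right;
    apply: (collinear_calL fK gK f_lines HL);
    rewrite ?gK ?in_setI ?xu ?yv ?uZ ?vZ ?wx ?wy ?wZ //.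
  - by apply: contraNneq vx => ->; rewrite gK.
  - by apply: contraNneq uy => ->.
  - by apply: contraNneq uy => ->; rewrite gK.
  - by apply: contraNneq vx => ->.
have fxy : f x != f y by rewrite (can_eq fK).
rewrite -(perp2_card HL' fxy).
exact: leq_trans (subset_leq_card sub) (leq_imset_card _ _).
Qed.
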